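(* Let $p\geq 3$ be odd and consider a chiral conformal field theory with Virasoro symmetry at central charge $c_{2,p}=1-3(p-2)^2/p$ whose vacuum is invariant under $L_{-1},L_0,L_1$. Suppose it contains two fields $\lambda_1,\lambda_2$ (the logarithmic partner fields of two rank-2 staggered modules sharing the highest weight submodule $\mathcal{I}_{1,p-1}$), both of conformal weight $1$, with operator product expansions $$T(z_1)\lambda_i(z_2) = \frac{\beta_i\,\phi(z_2)}{z_{12}^3} + \frac{\lambda_i(z_2)+\chi(z_2)}{z_{12}^2} + \frac{\partial\lambda_i(z_2)}{z_{12}} + \ldots,\qquad i=1,2,$$ where $\phi=\phi_{1,p-1}$ is the primary field of dimension $0$ with $\langle\phi(z_1)\phi(z_2)\rangle=1$ and $\chi=\partial\phi$. Then the two-point function $\langle\lambda_1(z_1)\lambda_2(z_2)\rangle$ can satisfy the Ward identities of global conformal invariance (under $L_{-1},L_0,L_1$) only if $\beta_1=\beta_2$. In particular, since the staggered modules $\mathcal{S}_{1,p+1}$ and $\mathcal{S}_{3,p-1}$ have logarithmic couplings $\beta_{1,p+1}=-\frac{p-2}{2}$ and $\beta_{3,p-1}=\frac{p-2}{p}$, which differ, these two staggered modules cannot both be present in the spectrum of such a theory.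
   Context: For $c=c_{2,p}$ and positive integers $r,s$, set $h_{r,s}=\frac{(pr-2s)^2-(p-2)^2}{8p}$; then $h_{1,p-1}=0$ and $h_{1,p+1}=h_{3,p-1}=1$. Let $\mathcal{I}_{r,s}$ denote the quotient of the Verma module of highest weight $h_{r,s}$ (highest weight state $|\phi_{r,s}\rangle$) by the Verma submodule generated by its singular vector at grade $rs$. In $\mathcal{I}_{1,p-1}$, $|\chi_{1,p-1}\rangle=L_{-1}|\phi_{1,p-1}\rangle$ is a non-vanishing singular vector of dimension $1$. A rank-2 staggered module $\mathcal{S}_{r,s}$ (here $(r,s)=(1,p+1)$ or $(3,p-1)$) is an indecomposable Virasoro module with highest weight submodule isomorphic to $\mathcal{I}_{1,p-1}$ and quotient by this submodule isomorphic to $\mathcal{I}_{r,s}$, generated by $|\phi_{1,p-1}\rangle$ and a state $|\lambda_{r,s}\rangle$ with $L_0|\lambda_{r,s}\rangle=|\lambda_{r,s}\rangle+|\chi_{1,p-1}\rangle$; its logarithmic coupling is $\beta_{r,s}=\langle\chi_{1,p-1}|\lambda_{r,s}\rangle$, with $L_1|\lambda_{r,s}\rangle=\beta_{r,s}|\phi_{1,p-1}\rangle$, for the inner product with $L_n^\dagger=L_{-n}$ normalised so that $\langle\phi_{1,p-1}|\phi_{1,p-1}\rangle=1$. Global conformal invariance means correlators are annihilated by the differential operators induced (via the OPEs with $T$) by $L_{-1}$, $L_0$ and $L_1$. The notation is $z_{12}=z_1-z_2$. *)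

From Stdlib Require Import Reals.
From Coquelicot Require Import Coquelicot.

Open Scope C_scope.

(* The four fields whose two-point functions enter the argument:
   Phi = phi_{1,p-1} (primary, weight h_{1,p-1} = 0),
   Chi = chi_{1,p-1} = d phi = L_{-1} phi (weight 1),
   Lam1, Lam2 = logarithmic partner fields lambda_1, lambda_2 (weight 1). *)
Inductive fld := Phi | Chi | Lam1 | Lam2.

Definition fsum (g : fld -> C) : C := g Phi + g Chi + g Lam1 + g Lam2.

(* Action of L_0 on the fields, read off from the OPEs with T:
   [L0c A X] is the coefficient of X in L_0 A.
   L_0 phi = 0, L_0 chi = chi, L_0 lambda_i = lambda_i + chi. *)
Definition L0c (A X : fld) : C :=
  match A, X with
  | Chi, Chi => 1
  | Lam1, Lam1 => 1
  | Lam1, Chi => 1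
  | Lam2, Lam2 => 1
  | Lam2, Chi => 1
  | _, _ => 0
  end.

(* Action of L_1 on the fields: L_1 phi = 0, L_1 chi = L_1 L_{-1} phi
   = 2 L_0 phi = 0, L_1 lambda_i = beta_i phi. *)
Definition L1c (b1 b2 : C) (A X : fld) : C :=
  match A, X with
  | Lam1, Phi => b1
  | Lam2, Phi => b2
  | _, _ => 0
  end.

(* A two-point function family: [corr A B z1 z2] = < A(z1) B(z2) >,
   with partial derivatives [d1 A B z1 z2] (in z1) and [d2 A B z1 z2]
   (in z2).  The global Ward identities: the correlator is annihilated by
   the differential operators induced by L_n, n = -1, 0, 1, namely
   sum_i [ z_i^{n+1} d_i + (n+1) z_i^n L_0^{(i)} + n(n+1)/2 z_i^{n-1} L_1^{(i)} ]. *)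
Definition ward_m1 (d1 d2 : fld -> fld -> C -> C -> C)
  (A B : fld) (z1 z2 : C) : Prop :=
  d1 A B z1 z2 + d2 A B z1 z2 = 0.

Definition ward_0 (corr d1 d2 : fld -> fld -> C -> C -> C)
  (A B : fld) (z1 z2 : C) : Prop :=
  z1 * d1 A B z1 z2 + z2 * d2 A B z1 z2
  + fsum (fun X => L0c A X * corr X B z1 z2)
  + fsum (fun X => L0c B X * corr A X z1 z2) = 0.

Definition ward_1 (b1 b2 : C) (corr d1 d2 : fld -> fld -> C -> C -> C)
  (A B : fld) (z1 z2 : C) : Prop :=
  z1 * z1 * d1 A B z1 z2 + z2 * z2 * d2 A B z1 z2
  + 2 * z1 * fsum (fun X => L0c A X * corr X B z1 z2)
  + 2 * z2 * fsum (fun X => L0c B X * corr A X z1 z2)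
  + fsum (fun X => L1c b1 b2 A X * corr X B z1 z2)
  + fsum (fun X => L1c b1 b2 B X * corr A X z1 z2) = 0.

Definition open2 (D : C -> C -> Prop) : Prop :=
  forall z1 z2, D z1 z2 -> exists eps : R, (0 < eps)%R /\
    forall w1 w2, (Cmod (w1 - z1) < eps)%R -> (Cmod (w2 - z2) < eps)%R ->
      D w1 w2.

Definition c2p (p : nat) : R := 1 - 3 * (INR p - 2) ^ 2 / INR p.
Definition hrs (p r s : nat) : R :=
  ((INR p * INR r - 2 * INR s) ^ 2 - (INR p - 2) ^ 2) / (8 * INR p).

Definition beta_1_pp1 (p : nat) : C := RtoC (- (INR p - 2) / 2).
Definition beta_3_pm1 (p : nat) : C := RtoC ((INR p - 2) / INR p).

From Stdlib Require Import Reals Lra.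
From Coquelicot Require Import Coquelicot.
Open Scope C_scope.

(* Evaluating the Ward identities at a single point z1 <> z2 already pins everything
   down: with w = z1 - z2, those for <phi lambda_2> and <lambda_1 phi> force
   w <phi lambda_2> = beta_2 and w <lambda_1 phi> = -beta_1, and their derivatives are
   fixed by L_0.  The L_0 and L_1 identities for <lambda_1 lambda_2> then leave exactly
   one consistency condition, in which the terms beta_1 beta_2 cancel and which
   reduces to beta_1 - beta_2 = 0. *)

Lemma eq_of_lin_comb1 (x y L c : C) : L = 0 -> x - y = c * L -> x = y.
Proof.
  intros E0 E. apply Ceq_minus. rewrite E, E0. ring.
Qed.

Lemma eq_of_lin_comb2 (x y L1 L2 c1 c2 : C) :
  L1 = 0 -> L2 = 0 -> x - y = c1 * L1 + c2 * L2 -> x = y.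
Proof.
  intros E1 E2 E. apply Ceq_minus. rewrite E, E1, E2. ring.
Qed.

Lemma eq0_of_mul_eq0 (w x : C) : w <> 0 -> w * x = 0 -> x = 0.
Proof.
  intros Hw E. replace x with (w * x / w) by (field; exact Hw).
  rewrite E. field. exact Hw.
Qed.

Section WardAtPoint.

Variables (b1 b2 : C) (corr d1 d2 : fld -> fld -> C -> C -> C) (z1 z2 : C).

Hypothesis Hoff : z1 <> z2.
Hypothesis Hphiphi : corr Phi Phi z1 z2 = 1.
Hypothesis HchiL : forall B, corr Chi B z1 z2 = d1 Phi B z1 z2.
Hypothesis HchiR : forall A, corr A Chi z1 z2 = d2 A Phi z1 z2.
Hypothesis Hwm1 : forall A B, ward_m1 d1 d2 A B z1 z2.
Hypothesis Hw0 : forall A B, ward_0 corr d1 d2 A B z1 z2.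
Hypothesis Hw1 : forall A B, ward_1 b1 b2 corr d1 d2 A B z1 z2.

Let w := z1 - z2.

Lemma sep_neq0 : w <> 0.
Proof. exact (Cminus_eq_contra _ _ Hoff). Qed.

Lemma d2_opp_d1 A B : d2 A B z1 z2 = - d1 A B z1 z2.
Proof.
  apply (eq_of_lin_comb1 _ _ _ 1 (Hwm1 A B)). ring.
Qed.

Ltac ward_at A B :=
  pose proof (Hw0 A B) as W0; pose proof (Hw1 A B) as W1;
  unfold ward_0, ward_1, fsum in W0, W1; simpl in W0, W1;
  rewrite ?HchiL, ?HchiR, ?d2_opp_d1, ?Hphiphi in W0, W1.

Lemma d1_Phi_Phi : d1 Phi Phi z1 z2 = 0.
Proof.
  ward_at Phi Phi. apply (eq0_of_mul_eq0 w); [exact sep_neq0|].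
  apply (eq_of_lin_comb1 _ _ _ 1 W0). unfold w. ring.
Qed.

Lemma sep_mul_corr_Phi_Lam2 : w * corr Phi Lam2 z1 z2 = b2.
Proof.
  ward_at Phi Lam2. rewrite d1_Phi_Phi in W0, W1.
  apply (eq_of_lin_comb2 _ _ _ _ (-1) (z1 + z2) W1 W0). unfold w. ring.
Qed.

Lemma sep_mul_d1_Phi_Lam2 : w * d1 Phi Lam2 z1 z2 = - corr Phi Lam2 z1 z2.
Proof.
  ward_at Phi Lam2. rewrite d1_Phi_Phi in W0, W1.
  apply (eq_of_lin_comb1 _ _ _ 1 W0). unfold w. ring.
Qed.

Lemma sep_mul_corr_Lam1_Phi : w * corr Lam1 Phi z1 z2 = - b1.
Proof.
  ward_at Lam1 Phi. rewrite d1_Phi_Phi in W0, W1.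
  apply (eq_of_lin_comb2 _ _ _ _ 1 (-(z1 + z2)) W1 W0). unfold w. ring.
Qed.

Lemma sep_mul_d1_Lam1_Phi : w * d1 Lam1 Phi z1 z2 = - corr Lam1 Phi z1 z2.
Proof.
  ward_at Lam1 Phi. rewrite d1_Phi_Phi in W0, W1.
  apply (eq_of_lin_comb1 _ _ _ 1 W0). unfold w. ring.
Qed.

Lemma Lam1_Lam2_consistency :
  w * d1 Phi Lam2 z1 z2 + w * d1 Lam1 Phi z1 z2
  + b1 * corr Phi Lam2 z1 z2 + b2 * corr Lam1 Phi z1 z2 = 0.
Proof.
  ward_at Lam1 Lam2.
  apply (eq_of_lin_comb2 _ _ _ _ 1 (-(z1 + z2)) W1 W0). unfold w. ring.
Qed.

Lemma ward_logarithmic_couplings_eq : b1 = b2.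
Proof.
  pose proof Lam1_Lam2_consistency as E.
  rewrite sep_mul_d1_Phi_Lam2, sep_mul_d1_Lam1_Phi in E.
  apply (eq_of_lin_comb1 _ _ _ w E).
  replace (b1 - b2) with
      (- (w * corr Phi Lam2 z1 z2) - w * corr Lam1 Phi z1 z2
       + b1 * (w * corr Phi Lam2 z1 z2) + b2 * (w * corr Lam1 Phi z1 z2))
    by (rewrite sep_mul_corr_Phi_Lam2, sep_mul_corr_Lam1_Phi; ring).
  ring.
Qed.

End WardAtPoint.

Lemma beta_1_pp1_neq_beta_3_pm1 (p : nat) : (2 < p)%nat -> beta_1_pp1 p <> beta_3_pm1 p.
Proof.
  intros Hp E. apply (f_equal fst) in E.
  unfold beta_1_pp1, beta_3_pm1 in E; simpl in E.
  apply lt_INR in Hp. simpl in Hp.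
  assert (Hpos : (0 < (INR p - 2) / INR p)%R) by (apply Rdiv_lt_0_compat; lra).
  lra.
Qed.

Theorem mainTheorem3 (p : nat) (hp3 : (3 <= p)%nat) (hodd : Nat.odd p = true)
  (b1 b2 : C) (D : C -> C -> Prop)
  (corr d1 d2 : fld -> fld -> C -> C -> C)
  (HDopen : open2 D) (HDne : exists z1 z2, D z1 z2)
  (HDoff : forall z1 z2, D z1 z2 -> z1 <> z2)
  (Hd1 : forall A B z1 z2, D z1 z2 ->
     @is_derive C_AbsRing C_NormedModule (fun w : C => corr A B w z2) z1 (d1 A B z1 z2))
  (Hd2 : forall A B z1 z2, D z1 z2 ->
     @is_derive C_AbsRing C_NormedModule (fun w : C => corr A B z1 w) z2 (d2 A B z1 z2))
  (Hphiphi : forall z1 z2, D z1 z2 -> corr Phi Phi z1 z2 = 1)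
  (HchiL : forall B z1 z2, D z1 z2 -> corr Chi B z1 z2 = d1 Phi B z1 z2)
  (HchiR : forall A z1 z2, D z1 z2 -> corr A Chi z1 z2 = d2 A Phi z1 z2)
  (Hwm1 : forall A B z1 z2, D z1 z2 -> ward_m1 d1 d2 A B z1 z2)
  (Hw0 : forall A B z1 z2, D z1 z2 -> ward_0 corr d1 d2 A B z1 z2)
  (Hw1 : forall A B z1 z2, D z1 z2 -> ward_1 b1 b2 corr d1 d2 A B z1 z2) :
  b1 = b2 /\
  ~ ((b1 = beta_1_pp1 p /\ b2 = beta_3_pm1 p) \/
     (b1 = beta_3_pm1 p /\ b2 = beta_1_pp1 p)).
Proof.
  destruct HDne as [z1 [z2 HD]].
  assert (Heq : b1 = b2).
  { apply (ward_logarithmic_couplings_eq b1 b2 corr d1 d2 z1 z2);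
      intros; auto. }
  split; [exact Heq|].
  pose proof (beta_1_pp1_neq_beta_3_pm1 p hp3) as Hne.
  intros [[E1 E2] | [E1 E2]]; apply Hne; congruence.
Qed.
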